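(* Let $M$ be a graded $R$-module, and give $qp.Spec_g(M)$ the quasi-Zariski topology. Then: (1) $qp.Spec_g(M)$ is a $T_1$-space if and only if it is a $T_0$-space and for every $Q\in qp.Spec_g(M)$, $Gr((Q:_RM))$ is a maximal element of $\{Gr((K:_RM))\mid K\in qp.Spec_g(M)\}$. (2) $qp.Spec_g(M)$ is a $T_1$-space if and only if it is a $T_0$-space and every graded quasi-primary submodule of $M$ satisfying the graded primeful property is a maximal element (with respect to inclusion) of $qp.Spec_g(M)$. (3) If $(0)\in qp.Spec_g(M)$, then $qp.Spec_g(M)$ is a $T_1$-space if and only if $(0)$ is the only graded quasi-primary submodule of $M$ satisfying the graded primeful property. (4) If $qp.Spec_g(M)$ is a $T_0$-space and $qp.Spec_g(M)=Max_g(M)$, then $qp.Spec_g(M)$ is a $T_1$-space.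
   Context: $R=\bigoplus_{g\in G}R_g$ is a graded commutative ring with identity graded by a group $G$, $h(R)=\bigcup_g R_g$; $M$ is a graded $R$-module, $h(M)$ its homogeneous elements. $Gr(I)$ is the graded radical of a graded ideal $I$. $(K:_RM)=\{r: rM\subseteq K\}$. Graded prime submodule: proper graded $P$ with $rm\in P$ ($r\in h(R), m\in h(M)$) implying $m\in P$ or $r\in(P:_RM)$. $Gr_M(K)$: intersection of graded prime submodules containing $K$ ($M$ if none). Graded primeful property of $K$: for each graded prime $p\supseteq(K:_RM)$ there is a graded prime submodule $P\supseteq K$ with $(P:_RM)=p$. Graded quasi-primary submodule: proper graded $Q$ with $rm\in Q$ ($r\in h(R),m\in h(M)$) implying $r\in Gr((Q:_RM))$ or $m\in Gr_M(Q)$. $qp.Spec_g(M)$: graded quasi-primary submodules with the graded primeful property. $qp\text{-}V_M^g(K)=\{Q\in qp.Spec_g(M): Gr((Q:_RM))\supseteq Gr((K:_RM))\}$; the quasi-Zariski topology has closed sets exactly these. $Max_g(M)$ is the set of graded maximal submodules of $M$, i.e. graded submodules $K\ne M$ with no graded submodule strictly between $K$ and $M$. *)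

From HB Require Import structures.
From mathcomp Require Import all_boot all_order all_algebra.
From mathcomp Require Import boolp classical_sets.
Set Implicit Arguments. Unset Strict Implicit. Unset Printing Implicit Defensive.
Import GRing.Theory.
Local Open Scope ring_scope.
Local Open Scope classical_set_scope.

Record group_law (G : Type) := GroupLaw {
  gmul : G -> G -> G;
  gone : G;
  ginv : G -> G;
  gmulA : forall x y z, gmul x (gmul y z) = gmul (gmul x y) z;
  gmul1 : forall x, gmul gone x = x;
  gmulV : forall x, gmul (ginv x) x = gone }.

Section Graded.
Context {G : eqType}.

Definition addsubgroup {V : zmodType} (A : set V) :=
  A 0 /\ forall x y, A x -> A y -> A (x - y).

Definition direct_decomp {V : zmodType} (F : G -> set V) :=
  (forall x : V, exists (s : seq G) (c : G -> V),
      [/\ uniq s, (forall g, g \in s -> F g (c g)) & x = \sum_(g <- s) c g]) /\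
  (forall (s : seq G) (c : G -> V), uniq s -> (forall g, g \in s -> F g (c g)) ->
      \sum_(g <- s) c g = 0 -> forall g, g \in s -> c g = 0).

Definition homog {V : zmodType} (F : G -> set V) : set V :=
  [set x | exists g, F g x].

Definition graded_subset {V : zmodType} (F : G -> set V) (N : set V) :=
  forall (s : seq G) (c : G -> V), uniq s -> (forall g, g \in s -> F g (c g)) ->
    N (\sum_(g <- s) c g) -> forall g, g \in s -> N (c g).

Definition graded_ring {R : comNzRingType} (L : group_law G) (RG : G -> set R) :=
  [/\ forall g, addsubgroup (RG g), direct_decomp RG &
      forall g h a b, RG g a -> RG h b -> RG (gmul L g h) (a * b)].

Definition graded_module {R : comNzRingType} {M : lmodType R} (L : group_law G)
    (RG : G -> set R) (MG : G -> set M) :=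
  [/\ forall g, addsubgroup (MG g), direct_decomp MG &
      forall g h r m, RG g r -> MG h m -> MG (gmul L g h) (r *: m)].

Definition ideal {R : comNzRingType} (I : set R) :=
  [/\ I 0, forall x y, I x -> I y -> I (x + y) & forall r x, I x -> I (r * x)].

Definition submodule {R : comNzRingType} {M : lmodType R} (N : set M) :=
  [/\ N 0, forall x y, N x -> N y -> N (x + y) & forall (r : R) x, N x -> N (r *: x)].

Definition graded_ideal {R : comNzRingType} (RG : G -> set R) (I : set R) :=
  ideal I /\ graded_subset RG I.

Definition graded_submodule {R : comNzRingType} {M : lmodType R} (MG : G -> set M)
    (N : set M) :=
  submodule N /\ graded_subset MG N.

Definition colon {R : comNzRingType} {M : lmodType R} (K : set M) : set R :=
  [set r | forall m : M, K (r *: m)].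

Definition Gr {R : comNzRingType} (RG : G -> set R) (I : set R) : set R :=
  [set x | forall (s : seq G) (c : G -> R), uniq s ->
     (forall g, g \in s -> RG g (c g)) -> x = \sum_(g <- s) c g ->
     forall g, g \in s -> exists n : nat, I (c g ^+ n.+1)].

Definition graded_prime_ideal {R : comNzRingType} (RG : G -> set R) (p : set R) :=
  [/\ graded_ideal RG p, p <> setT &
      forall a b, homog RG a -> homog RG b -> p (a * b) -> p a \/ p b].

Definition graded_prime_submodule {R : comNzRingType} {M : lmodType R}
    (RG : G -> set R) (MG : G -> set M) (P : set M) :=
  [/\ graded_submodule MG P, P <> setT &
      forall r m, homog RG r -> homog MG m -> P (r *: m) -> P m \/ colon P r].

(* Gr_M(K): intersection of the graded prime submodules containing K
   (= M if there is none) *)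
Definition GrM {R : comNzRingType} {M : lmodType R} (RG : G -> set R)
    (MG : G -> set M) (K : set M) : set M :=
  [set m | forall P, graded_prime_submodule RG MG P -> K `<=` P -> P m].

Definition graded_primeful {R : comNzRingType} {M : lmodType R} (RG : G -> set R)
    (MG : G -> set M) (K : set M) :=
  forall p, graded_prime_ideal RG p -> colon K `<=` p ->
    exists P, [/\ graded_prime_submodule RG MG P, K `<=` P & colon P = p].

Definition graded_quasi_primary {R : comNzRingType} {M : lmodType R}
    (RG : G -> set R) (MG : G -> set M) (Q : set M) :=
  [/\ graded_submodule MG Q, Q <> setT &
      forall r m, homog RG r -> homog MG m -> Q (r *: m) ->
        Gr RG (colon Q) r \/ GrM RG MG Q m].

Definition qpSpec {R : comNzRingType} {M : lmodType R} (RG : G -> set R)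
    (MG : G -> set M) : set (set M) :=
  [set Q | graded_quasi_primary RG MG Q /\ graded_primeful RG MG Q].

Definition qpV {R : comNzRingType} {M : lmodType R} (RG : G -> set R)
    (MG : G -> set M) (K : set M) : set (set M) :=
  [set Q | qpSpec RG MG Q /\ Gr RG (colon K) `<=` Gr RG (colon Q)].

Definition qp_closed {R : comNzRingType} {M : lmodType R} (RG : G -> set R)
    (MG : G -> set M) : set (set (set M)) :=
  [set F | exists K, graded_submodule MG K /\ F = qpV RG MG K].

(* separation axioms, phrased through the closed sets
   (open sets are complements of closed sets) *)
Definition qpT0 {R : comNzRingType} {M : lmodType R} (RG : G -> set R)
    (MG : G -> set M) :=
  forall Q Q', qpSpec RG MG Q -> qpSpec RG MG Q' -> Q <> Q' ->
    exists F, qp_closed RG MG F /\ ((F Q /\ ~ F Q') \/ (F Q' /\ ~ F Q)).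

Definition qpT1 {R : comNzRingType} {M : lmodType R} (RG : G -> set R)
    (MG : G -> set M) :=
  forall Q Q', qpSpec RG MG Q -> qpSpec RG MG Q' -> Q <> Q' ->
    exists F, qp_closed RG MG F /\ F Q' /\ ~ F Q.

Definition MaxG {R : comNzRingType} {M : lmodType R} (MG : G -> set M) : set (set M) :=
  [set K | [/\ graded_submodule MG K, K <> setT &
     forall N, graded_submodule MG N -> K `<=` N -> N = K \/ N = setT]].

End Graded.

From HB Require Import structures.
From mathcomp Require Import all_boot all_order all_algebra.
From mathcomp Require Import boolp classical_sets.
Set Implicit Arguments. Unset Strict Implicit. Unset Printing Implicit Defensive.
Import GRing.Theory.
Local Open Scope ring_scope.
Local Open Scope classical_set_scope.

(* The closure of a point Q' of qp.Spec_g(M) is qp-V(Q'), so T1 says exactly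
   that Gr((Q':M)) is contained in Gr((Q:M)) only when Q = Q', while T0 makes
   Q |-> Gr((Q:M)) injective; (1), (3) and the forward half of (2) follow.
   For the converse of (2), assume the points are inclusion-maximal and let
   Q be a point.  By Zorn, (Q:M) lies in a maximal graded ideal m, which is
   graded prime; primefulness gives a graded prime submodule P containing Q
   with (P:M) = m, and P is again a point, so Q = P and (Q:M) = m is maximal.
   Since Gr(m) = m for a graded prime m, an inclusion between the radicals of
   two such colon ideals is an equality, and T0 concludes.  (4) is a special
   case of (2). *)

Section GroupLaw.
Variables (G : Type) (L : group_law G).

Lemma gmulxV x : gmul L x (ginv L x) = gone L.
Proof.
set y := ginv L x.
transitivity (gmul L (gmul L (ginv L y) y) (gmul L x y)); first by rewrite gmulV gmul1.
by rewrite -gmulA (gmulA L y x y) /y gmulV gmul1 gmulV.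
Qed.

Lemma gmulx1 x : gmul L x (gone L) = x.
Proof. by rewrite -(gmulV L x) gmulA gmulxV gmul1. Qed.

Lemma gmulK h : cancel (gmul L ^~ h) (gmul L ^~ (ginv L h)).
Proof. by move=> g; rewrite -gmulA gmulxV gmulx1. Qed.

End GroupLaw.

Lemma graded_subset_shift (G : eqType) (L : group_law G) (V : zmodType)
    (F : G -> set V) (N : set V) (h : G) (s : seq G) (c : G -> V) :
  graded_subset F N -> uniq s -> (forall g, g \in s -> F (gmul L g h) (c g)) ->
  N (\sum_(g <- s) c g) -> forall g, g \in s -> N (c g).
Proof.
move=> gN us Fc Ns g gs.
pose f g := gmul L g h; pose c' k := c (gmul L k (ginv L h)).
have := gN (map f s) c' _ _ _ (f g) (map_f f gs).
rewrite /c' /f gmulK; apply.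
- by rewrite map_inj_uniq //; apply: can_inj (gmulK L h).
- by move=> k /mapP [x xs ->]; rewrite gmulK; apply: Fc.
- by rewrite big_map; under eq_bigr => x _ do rewrite gmulK.
Qed.

Section GradedRing.
Variables (R : comNzRingType) (G : eqType) (L : group_law G) (RG : G -> set R).
Hypothesis hR : graded_ring L RG.

Definition proper_graded_ideal (I : set R) := graded_ideal RG I /\ ~ I 1.

Definition maximal_graded_ideal (m : set R) :=
  proper_graded_ideal m /\ forall I, proper_graded_ideal I -> m `<=` I -> I = m.

Lemma Gr_mono (I J : set R) : I `<=` J -> Gr RG I `<=` Gr RG J.
Proof.
move=> IJ x Hx s c us Hc xE g gs.
by have [n Hn] := Hx s c us Hc xE g gs; exists n; apply: IJ.
Qed.

Lemma sub_Gr (I : set R) : graded_ideal RG I -> I `<=` Gr RG I.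
Proof.
move=> [_ gI] x Ix s c us Hc xE g gs; exists 0%N; rewrite expr1.
by apply: (gI s c) => //; rewrite -xE.
Qed.

Lemma homogX x n : homog RG x -> homog RG (x ^+ n.+1).
Proof.
case: hR => _ _ hmul [g Hx]; elim: n => [|n [h Hh]]; first by exists g.
by exists (gmul L g h); rewrite exprS; apply: hmul.
Qed.

Lemma graded_prime_homogX (p : set R) x n :
  graded_prime_ideal RG p -> homog RG x -> p (x ^+ n.+1) -> p x.
Proof.
move=> [_ _ pP] hx; elim: n => [|n IH]; first by rewrite expr1.
by rewrite exprS => /(pP _ _ hx (homogX n hx)) [|/IH].
Qed.

Lemma Gr_prime_sub (p : set R) : graded_prime_ideal RG p -> Gr RG p `<=` p.
Proof.
move=> pp x Hx; have [[[p0 pD _] _] _ _] := pp.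
have [_ [hdec _] _] := hR; have [s [c [us Hc xE]]] := hdec x.
rewrite xE big_seq; apply: big_ind => // g gs.
have [n Hn] := Hx s c us Hc xE g gs.
by apply: (graded_prime_homogX pp _ Hn); exists g; apply: Hc.
Qed.

Lemma graded_prime_ideal_proper (p : set R) :
  graded_prime_ideal RG p -> proper_graded_ideal p.
Proof.
move=> [gp pT _]; split => // p1; apply: pT; have [[_ _ pM] _] := gp.
by apply/seteqP; split => // x _; rewrite -(mulr1 x); apply: pM.
Qed.

Lemma graded_ideal_quot (m : set R) (b : R) (hb : G) :
  graded_ideal RG m -> RG hb b -> graded_ideal RG [set r | m (r * b)].
Proof.
case: hR => _ _ hmul [[m0 mD mM] gm] Hb; split.
  split => /=.
  - by rewrite mul0r.
  - by move=> x y Hx Hy; rewrite mulrDl; apply: mD.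
  - by move=> r x Hx; rewrite -mulrA; apply: mM.
move=> s c us Hc Hs g gs /=.
apply: (@graded_subset_shift G L R RG m hb s (fun g => c g * b)) => //.
- by move=> g' g's; apply: hmul; [apply: Hc | apply: Hb].
- by rewrite -mulr_suml; apply: Hs.
Qed.

Lemma maximal_graded_ideal_prime (m : set R) :
  maximal_graded_ideal m -> graded_prime_ideal RG m.
Proof.
move=> [[gm m1] mmax]; split => //; first by move=> mT; apply: m1; rewrite mT.
move=> a b _ [hb Hb] mab.
case: (pselect (m b)) => [|nb]; [by right | left].
have [[_ _ mM] _] := gm.
have mq : m `<=` [set r | m (r * b)] by move=> x xm /=; rewrite mulrC; apply: mM.
have qproper : proper_graded_ideal [set r | m (r * b)].
  by split; [exact: graded_ideal_quot Hb | rewrite /= mul1r].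
by have := mab : [set r | m (r * b)] a; rewrite (mmax _ qproper mq).
Qed.

Lemma bigcup_chain_proper_graded_ideal (I : Type) (P : set I) (D : I -> set R) :
  P !=set0 -> (forall i, P i -> proper_graded_ideal (D i)) ->
  (forall i j, P i -> P j -> D i `<=` D j \/ D j `<=` D i) ->
  proper_graded_ideal (\bigcup_(i in P) D i).
Proof.
move=> [i0 Pi0] PD Dtot.
have common x y : (\bigcup_(i in P) D i) x -> (\bigcup_(i in P) D i) y ->
    exists2 i, P i & D i x /\ D i y.
  move=> [i Pi Dix] [j Pj Djy]; have [ij|ji] := Dtot i j Pi Pj.
  - by exists j => //; split => //; apply: ij.
  - by exists i => //; split => //; apply: ji.
split; [split; [split|] |].
- by exists i0 => //; have [[[]]] := PD i0 Pi0.
- move=> x y Ux Uy; have [i Pi [Dix Diy]] := common x y Ux Uy.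
  by have [[[_ DD _] _] _] := PD i Pi; exists i => //; apply: DD.
- by move=> r x [i Pi Dix]; have [[[_ _ DM] _] _] := PD i Pi; exists i => //; apply: DM.
- move=> s c us Hc [i Pi Di] g gs; have [[_ gD] _] := PD i Pi.
  by exists i => //; apply: (gD s c).
- by move=> [i Pi Di1]; have [_ nD] := PD i Pi; apply: nD.
Qed.

Lemma exists_maximal_graded_ideal (C : set R) :
  proper_graded_ideal C -> exists2 m, maximal_graded_ideal m & C `<=` m.
Proof.
(* Zorn_bigcup also needs the empty chain, whose union is set0: hence C `|` X. *)
move=> pC; pose P X := proper_graded_ideal (C `|` X).
have chainP (F : set (set R)) : F `<=` P -> total_on F subset ->
    P (\bigcup_(X in F) X).
  move=> FP Ftot; have [->|/eqP/set0P F0] := pselect (F = set0).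
    by rewrite /P bigcup_set0 setU0.
  rewrite /P -bigcupUr //; apply: bigcup_chain_proper_graded_ideal => //.
  by move=> X Y FX FY; have [XY|YX] := Ftot X Y FX FY; [left|right]; apply: setUS.
have [A [PA Amax]] := Zorn_bigcup chainP.
exists (C `|` A); last by move=> x Cx; left.
split => // I pI CAI.
have PI : P I by rewrite /P setUidr // => x Cx; apply: CAI; left.
suff IA : I `<=` A by apply/seteqP; split => [x /IA|//]; right.
apply: contrapT => nIA; apply: (Amax I) => //; split => // x Ax.
by apply: CAI; right.
Qed.

End GradedRing.

Section QuasiZariski.
Variables (R : comNzRingType) (G : eqType) (L : group_law G) (RG : G -> set R).
Variables (M : lmodType R) (MG : G -> set M).
Hypotheses (hR : graded_ring L RG) (hM : graded_module L RG MG).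

Local Notation Spec := (qpSpec RG MG).
Local Notation Grc K := (Gr RG (colon K)).

Definition qpSpec_antichain :=
  forall Q, Spec Q -> forall K, Spec K -> Q `<=` K -> Q = K.

Lemma colon_mono (K K' : set M) : K `<=` K' -> colon K `<=` colon K'.
Proof. by move=> KK r Hr m; apply: KK; apply: Hr. Qed.

Lemma colon_graded_ideal (K : set M) :
  graded_submodule MG K -> graded_ideal RG (colon K).
Proof.
case: hM => _ [hdec _] hmul [[K0 KD KZ] gK]; split.
  split.
  - by move=> m; rewrite scale0r.
  - by move=> x y Hx Hy m; rewrite scalerDl; apply: KD.
  - by move=> r x Hx m; rewrite -scalerA; apply: KZ.
move=> s c us Hc Hs g gs m.
have [t [d [ut Hd ->]]] := hdec m.
rewrite scaler_sumr big_seq; apply: big_ind => // h ht.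
apply: (@graded_subset_shift G L M MG K h s (fun g => c g *: d h)) => //.
- by move=> g' g's; apply: hmul; [apply: Hc | apply: Hd].
- by rewrite -scaler_suml; apply: Hs.
Qed.

Lemma colon_proper_graded_ideal (K : set M) :
  graded_submodule MG K -> K <> setT -> proper_graded_ideal RG (colon K).
Proof.
move=> gK nK; split; first exact: colon_graded_ideal.
move=> C1; apply: nK; apply/seteqP; split => // x _.
by have := C1 x; rewrite scale1r.
Qed.

Lemma graded_prime_quasi_primary (P : set M) :
  graded_prime_submodule RG MG P -> graded_quasi_primary RG MG P.
Proof.
move=> [gP nP pP]; split => // r x hr hx /(pP r x hr hx) [Px|cPr].
- by right => P' _; apply.
- by left; apply: (sub_Gr (colon_graded_ideal gP)).
Qed.

Lemma graded_prime_primeful (P : set M) :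
  graded_prime_submodule RG MG P -> maximal_graded_ideal RG (colon P) ->
  graded_primeful RG MG P.
Proof.
move=> gpP [_ Pmax] p /graded_prime_ideal_proper pp Pp.
by exists P; split => //; symmetry; apply: Pmax.
Qed.

Lemma qpT1_iff_Grc_sub_eq : qpT1 RG MG <->
  forall Q Q', Spec Q -> Spec Q' -> Grc Q' `<=` Grc Q -> Q = Q'.
Proof.
split => [T1 Q Q' SQ SQ' sub | Grc_eq Q Q' SQ SQ' nQ].
  apply: contrapT => nQ; have [F [[K [gK ->]] [[_ FQ'] nFQ]]] := T1 Q Q' SQ SQ' nQ.
  by apply: nFQ; split => //; apply: subset_trans sub.
exists (qpV RG MG Q'); split; first by have [[gQ' _ _] _] := SQ'; exists Q'.
by split => [|[_ sub]]; [split | apply/nQ/Grc_eq].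
Qed.

Lemma qpT1_qpT0 : qpT1 RG MG -> qpT0 RG MG.
Proof.
move=> T1 Q Q' SQ SQ' nQ; have [F [cF [FQ' nFQ]]] := T1 Q Q' SQ SQ' nQ.
by exists F; split => //; right.
Qed.

Lemma qpT0_Grc_inj : qpT0 RG MG ->
  forall Q Q', Spec Q -> Spec Q' -> Grc Q = Grc Q' -> Q = Q'.
Proof.
move=> T0 Q Q' SQ SQ' E; apply: contrapT => nQ.
have [F [[K [gK ->]] [[[_ s1] n2]|[[_ s2] n1]]]] := T0 Q Q' SQ SQ' nQ.
- by apply: n2; split => //; rewrite -E.
- by apply: n1; split => //; rewrite E.
Qed.

Lemma colon_maximal_of_antichain (K : set M) :
  qpSpec_antichain -> Spec K -> maximal_graded_ideal RG (colon K).
Proof.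
move=> anti SK; have [[gK nK _] pfK] := SK.
have [m mmax Km] := exists_maximal_graded_ideal (colon_proper_graded_ideal gK nK).
have [P [gpP KP Pm]] := pfK m (maximal_graded_ideal_prime hR mmax) Km.
have SP : Spec P.
  split; first exact: graded_prime_quasi_primary.
  by apply: graded_prime_primeful; rewrite ?Pm.
by rewrite (anti K SK P SP KP) Pm.
Qed.

Lemma qpT1_of_antichain : qpT0 RG MG -> qpSpec_antichain -> qpT1 RG MG.
Proof.
move=> T0 anti; apply/qpT1_iff_Grc_sub_eq => Q Q' SQ SQ' sub.
have mQ := colon_maximal_of_antichain anti SQ.
have [[gQ' _] Q'max] := colon_maximal_of_antichain anti SQ'.
apply: (qpT0_Grc_inj T0 SQ SQ'); congr (Gr RG _); apply: Q'max; first by case: mQ.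
move=> x /(sub_Gr gQ') /sub.
exact: (Gr_prime_sub hR (maximal_graded_ideal_prime hR mQ)).
Qed.

Lemma qpT1_iff_Grc_maximal : qpT1 RG MG <-> qpT0 RG MG /\
  (forall Q, Spec Q -> forall K, Spec K -> Grc Q `<=` Grc K -> Grc Q = Grc K).
Proof.
split => [T1|[T0 Grc_max]].
  split => [|Q SQ K SK sub]; first exact: qpT1_qpT0.
  by rewrite (proj1 qpT1_iff_Grc_sub_eq T1 K Q SK SQ sub).
apply/qpT1_iff_Grc_sub_eq => Q Q' SQ SQ' sub.
by apply: (qpT0_Grc_inj T0 SQ SQ'); symmetry; apply: Grc_max.
Qed.

Lemma qpT1_iff_antichain : qpT1 RG MG <-> qpT0 RG MG /\ qpSpec_antichain.
Proof.
split => [T1|[T0 anti]]; last exact: qpT1_of_antichain.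
split => [|Q SQ K SK QK]; first exact: qpT1_qpT0.
symmetry; apply: (proj1 qpT1_iff_Grc_sub_eq T1 K Q SK SQ).
exact: Gr_mono (colon_mono QK).
Qed.

Lemma qpT1_iff_qpSpec_zero : Spec [set 0] ->
  (qpT1 RG MG <-> forall Q, Spec Q -> Q = [set 0]).
Proof.
move=> S0; split => [T1 Q SQ | only0].
  apply: (proj1 qpT1_iff_Grc_sub_eq T1 _ _ SQ S0).
  apply: Gr_mono; apply: colon_mono => x -> /=.
  by have [[[[Q0 _ _] _] _ _] _] := SQ.
by move=> Q Q' SQ SQ' []; rewrite (only0 _ SQ) (only0 _ SQ').
Qed.

Lemma qpT1_of_MaxG : qpT0 RG MG -> Spec = MaxG MG -> qpT1 RG MG.
Proof.
move=> T0 E; apply: qpT1_of_antichain => // Q + K.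
rewrite E => -[_ _ Qmax] [gK nK _] QK.
by case: (Qmax K gK QK) => [->|/nK].
Qed.

End QuasiZariski.

Theorem theorem4p4 (R : comNzRingType) (G : eqType) (L : group_law G)
  (RG : G -> set R) (M : lmodType R) (MG : G -> set M)
  (hR : graded_ring L RG) (hM : graded_module L RG MG) :
  [/\ (qpT1 RG MG <->
        qpT0 RG MG /\
        (forall Q, qpSpec RG MG Q -> forall K, qpSpec RG MG K ->
           Gr RG (colon Q) `<=` Gr RG (colon K) -> Gr RG (colon Q) = Gr RG (colon K))),
      (qpT1 RG MG <->
        qpT0 RG MG /\
        (forall Q, qpSpec RG MG Q -> forall K, qpSpec RG MG K -> Q `<=` K -> Q = K)),
      (qpSpec RG MG [set 0] ->
        (qpT1 RG MG <-> forall Q, qpSpec RG MG Q -> Q = [set 0])) &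
      (qpT0 RG MG -> qpSpec RG MG = MaxG MG -> qpT1 RG MG)].
Proof.
split.
- exact: qpT1_iff_Grc_maximal.
- exact: qpT1_iff_antichain hR hM.
- exact: qpT1_iff_qpSpec_zero.
- exact: qpT1_of_MaxG hR hM.
Qed.
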